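(* Let $n\ge0$ be an integer. Define $Q,\tilde Q:(\max\{\sqrt{\chi_n}/c,1\},\infty)\to\mathbb R$ by $$Q(t)=\psi_n^2(t)+\frac{(t^2-1)(\psi_n'(t))^2}{c^2t^2-\chi_n},\qquad \tilde Q(t)=(t^2-1)\big((c^2t^2-\chi_n)\psi_n^2(t)+(t^2-1)(\psi_n'(t))^2\big).$$ Then $Q$ is decreasing and $\tilde Q$ is increasing on $(\max\{\sqrt{\chi_n}/c,1\},\infty)$.
   Context: For a real number $c>0$, let $\psi_0,\psi_1,\dots$ be the prolate spheroidal wave functions of band limit $c$: the real $L^2[-1,1]$-normalized eigenfunctions of $F_c[\varphi](x)=\int_{-1}^1\varphi(t)e^{icxt}\,dt$ with eigenvalues $\lambda_n$ ordered by $|\lambda_n|\ge|\lambda_{n+1}|$, extended to entire functions by $\lambda_n\psi_n(x)=\int_{-1}^1\psi_n(t)e^{icxt}\,dt$. $\chi_0<\chi_1<\dots$ are the positive numbers such that $\psi_n$ satisfies $(1-x^2)\psi''(x)-2x\psi'(x)+(\chi_n-c^2x^2)\psi(x)=0$ for all real $x$. *)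

From Stdlib Require Import Reals Lra List.
From Coquelicot Require Import Coquelicot.
Open Scope R_scope.

Definition cis (theta : R) : C := (cos theta, sin theta).

Definition Fc_integrand (c : R) (phi : R -> R) (x : R) : R -> C :=
  fun t => (RtoC (phi t) * cis (c * x * t))%C.

Definition Fc (c : R) (phi : R -> R) (x : R) : C :=
  @RInt C_R_CompleteNormedModule (Fc_integrand c phi x) (-1) 1.

(* (phi, lam) is an eigenpair of F_c, phi real and L^2[-1,1]-normalized,
   and phi is extended to all of R by  lam * phi(x) = F_c[phi](x). *)
Definition pswf_eigenpair (c : R) (phi : R -> R) (lam : C) : Prop :=
  ex_RInt (fun t => phi t ^ 2) (-1) 1 /\
  RInt (fun t => phi t ^ 2) (-1) 1 = 1 /\
  (forall x : R, @ex_RInt C_R_NormedModule (Fc_integrand c phi x) (-1) 1) /\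
  (forall x : R, (lam * RtoC (phi x))%C = Fc c phi x).

Definition Fc_eigenvalue (c : R) (mu : C) : Prop :=
  exists phi : R -> R, pswf_eigenpair c phi mu.

(* psi is (a choice of) the n-th prolate spheroidal wave function of band
   limit c, with eigenvalue lam: exactly n eigenvalues of F_c have modulus
   strictly larger than |lam| (ordering |lam_0| >= |lam_1| >= ...). *)
Definition is_pswf (c : R) (n : nat) (psi : R -> R) (lam : C) : Prop :=
  pswf_eigenpair c psi lam /\
  exists l : list C, length l = n /\ NoDup l /\
    forall mu : C, In mu l <-> (Fc_eigenvalue c mu /\ Cmod lam < Cmod mu).

Definition prolate_ode (c chi : R) (psi : R -> R) : Prop :=
  (forall x, ex_derive psi x) /\
  (forall x, ex_derive (Derive psi) x) /\
  (forall x, (1 - x ^ 2) * Derive (Derive psi) x - 2 * x * Derive psi x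
             + (chi - c ^ 2 * x ^ 2) * psi x = 0).

Definition Qfun (c chi : R) (psi : R -> R) (t : R) : R :=
  psi t ^ 2 + (t ^ 2 - 1) * (Derive psi t) ^ 2 / (c ^ 2 * t ^ 2 - chi).

Definition Qtilde (c chi : R) (psi : R -> R) (t : R) : R :=
  (t ^ 2 - 1) * ((c ^ 2 * t ^ 2 - chi) * psi t ^ 2 + (t ^ 2 - 1) * (Derive psi t) ^ 2).

From Stdlib Require Import Reals Lra Psatz Classical.
From Coquelicot Require Import Coquelicot.
Open Scope R_scope.

(* Along the ODE, Q' = - w psi'^2 / (c^2 t^2 - chi)^2 and Qtilde' = w psi^2 with
   w(t) = 2 t (2 c^2 t^2 - c^2 - chi) > 0 for t > max(sqrt chi / c, 1), so Q is
   nonincreasing and Qtilde nondecreasing.  Strict monotonicity can only fail if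
   psi' (resp. psi) vanishes on a subinterval, and then psi vanishes there.  Unique
   continuation for ((1 - t^2) psi')' = (c^2 t^2 - chi) psi, which survives the
   singular point t = 1, pushes the zero set down to (-1, t], contradicting
   int_{-1}^1 psi^2 = 1. *)

Lemma continuity_pt_of_ex_derive (f : R -> R) (x : R) :
  ex_derive f x -> continuity_pt f x.
Proof. intros Hf; apply continuity_pt_filterlim, (ex_derive_continuous f x Hf). Qed.

Lemma abs_sub_le_of_derive_bound (f df : R -> R) (a b L : R) :
  a <= b ->
  (forall x, a <= x <= b -> is_derive f x (df x)) ->
  (forall x, a <= x <= b -> Rabs (df x) <= L) ->
  Rabs (f b - f a) <= L * (b - a).
Proof.
  intros Hab Hd Hb.
  destruct (MVT_abs f df a b) as [xi [Hmvt Hxi]].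
  { rewrite Rmin_left, Rmax_right by lra. intros x Hx. now apply is_derive_Reals, Hd. }
  rewrite Rmin_left, Rmax_right in Hxi by lra.
  rewrite Hmvt, (Rabs_pos_eq (b - a)) by lra.
  apply Rmult_le_compat_r; [lra | now apply Hb].
Qed.

Lemma is_derive_eq0_of_constant_right (f : R -> R) (x eta l : R) :
  0 < eta -> (forall y, x <= y <= x + eta -> f y = f x) -> is_derive f x l -> l = 0.
Proof.
  intros Heta Hc Hd. apply is_derive_Reals in Hd.
  destruct (Req_dec l 0) as [|Hl]; [easy|]. exfalso.
  assert (Hl2 : 0 < Rabs l / 2) by (apply Rabs_pos_lt in Hl; lra).
  destruct (Hd _ Hl2) as [[d Hd0] Hq]; simpl in Hq.
  set (h := Rmin (d / 2) eta).
  assert (Hh : 0 < h) by (apply Rmin_pos; lra).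
  assert (h <= d / 2) by apply Rmin_l.
  assert (h <= eta) by apply Rmin_r.
  specialize (Hq h ltac:(lra) ltac:(rewrite Rabs_pos_eq; lra)).
  rewrite Hc, Rminus_diag, Rdiv_0_l, Rminus_0_l, Rabs_Ropp in Hq by lra.
  lra.
Qed.

Lemma continuity_pt_eq0_of_vanishing_right (f : R -> R) (x eta : R) :
  continuity_pt f x -> 0 < eta -> (forall y, x < y < x + eta -> f y = 0) -> f x = 0.
Proof.
  intros Hf Heta Hz.
  apply continuity_pt_filterlim in Hf.
  apply (filterlim_locally_unique (F := at_right x) f).
  - exact (filterlim_filter_le_1 f (filter_le_within (F := locally x) _) Hf).
  - apply (filterlim_ext_loc (fun _ => 0)); [|apply filterlim_const].
    exists (mkposreal _ Heta); intros y Hy Hxy; simpl in Hy.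
    apply Rabs_lt_between' in Hy. symmetry; apply Hz; lra.
Qed.

Lemma vanishing_extends_left (f : R -> R) (lo a b : R) :
  (forall x, continuity_pt f x) ->
  (forall x eta, lo < x -> 0 < eta -> (forall y, x <= y <= x + eta -> f y = 0) ->
     exists d, 0 < d /\ forall y, x - d <= y <= x -> f y = 0) ->
  lo < a -> a < b -> (forall y, a <= y <= b -> f y = 0) ->
  forall y, lo < y <= b -> f y = 0.
Proof.
  intros Hcont Hloc Hlo Hab Hz.
  set (E d := 0 <= d <= a - lo /\ forall y, a - d <= y <= b -> f y = 0).
  assert (HE0 : E 0) by (split; [lra | intros y Hy; apply Hz; lra]).
  destruct (completeness E) as [D [Hub Hlub]].
  { exists (a - lo); intros d Hd; apply Hd. }
  { now exists 0. }
  assert (HD0 : 0 <= D) by now apply Hub.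
  assert (HDmax : D <= a - lo) by (apply Hlub; intros d Hd; apply Hd).
  assert (Hopen : forall y, a - D < y <= b -> f y = 0).
  { intros y Hy. apply NNPP; intros Hne.
    enough (D <= a - y) by lra.
    apply Hlub; intros d [_ Hd].
    destruct (Rle_dec (a - d) y); [now elim Hne; apply Hd | lra]. }
  destruct (Rle_lt_or_eq_dec D (a - lo) HDmax) as [HDlt | ->].
  2: { intros y Hy; apply Hopen; lra. }
  exfalso.
  assert (Hclosed : forall y, a - D <= y <= b -> f y = 0).
  { intros y Hy. destruct (Req_dec y (a - D)) as [->|]; [|apply Hopen; lra].
    apply (continuity_pt_eq0_of_vanishing_right f _ (b - (a - D))); [easy | lra |].
    intros z Hz'; apply Hopen; lra. }
  destruct (Hloc (a - D) (b - (a - D))) as [d [Hd Hext]]; [lra | lra | |].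
  { intros y Hy; apply Hclosed; lra. }
  set (D' := Rmin (D + d) (a - lo)).
  assert (D < D') by (apply Rmin_glb_lt; lra).
  assert (D' <= D + d) by apply Rmin_l.
  enough (HE : E D') by (apply Hub in HE; lra).
  split; [split; [lra | apply Rmin_r] |].
  intros y Hy. destruct (Rle_dec (a - D) y); [apply Hclosed | apply Hext]; lra.
Qed.

Lemma lt_of_derive_nonneg (f df : R -> R) (s t : R) :
  s < t ->
  (forall x, s <= x <= t -> is_derive f x (df x)) ->
  (forall x, s <= x <= t -> 0 <= df x) ->
  ~ (forall y, s < y < t -> df y = 0) ->
  f s < f t.
Proof.
  intros Hst Hd Hpos Hnz.
  assert (Hmono : forall a b, s <= a -> a < b -> b <= t -> f a <= f b).
  { intros a b Ha Hab Hb.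
    destruct (MVT_cor2 f df a b Hab) as [xi [Hmvt Hxi]].
    { intros x Hx; apply is_derive_Reals, Hd; lra. }
    assert (0 <= df xi) by (apply Hpos; lra). nra. }
  apply Rnot_le_lt; intros Hts; apply Hnz; intros y Hy.
  assert (Hconst : forall z, s <= z <= t -> f z = f s).
  { intros z Hz.
    destruct (Req_dec z s) as [->|]; [easy|].
    assert (f s <= f z) by (apply Hmono; lra).
    destruct (Req_dec z t) as [->|]; [lra|].
    assert (f z <= f t) by (apply Hmono; lra). lra. }
  apply (is_derive_eq0_of_constant_right f y (t - y)); [lra | | apply Hd; lra].
  intros z Hz; rewrite (Hconst z), (Hconst y); lra.
Qed.

Lemma sub_le_abs_one_sub_sqr_left (x0 : R) :
  -1 < x0 ->
  exists d B, 0 < d /\ 0 < B /\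
    forall y, x0 - d <= y < x0 -> x0 - y <= B * Rabs (1 - y ^ 2).
Proof.
  intros Hx0. destruct (Rle_lt_dec x0 1) as [Hle | Hgt].
  - exists ((1 + x0) / 2), (2 / (1 + x0)).
    split; [lra|]. split; [apply Rdiv_lt_0_compat; lra|].
    intros y Hy. rewrite Rabs_pos_eq by nra.
    apply (Rmult_le_reg_l ((1 + x0) / 2)); [lra|].
    replace ((1 + x0) / 2 * (2 / (1 + x0) * (1 - y ^ 2))) with (1 - y ^ 2) by (field; lra).
    nra.
  - exists ((x0 - 1) / 2), 1. split; [lra|]. split; [lra|].
    intros y Hy. rewrite Rabs_left by nra. nra.
Qed.

Lemma prolate_coef_bound (c chi x0 e : R) :
  x0 - 1 <= e <= x0 -> Rabs (c ^ 2 * e ^ 2 - chi) <= c ^ 2 * (Rabs x0 + 1) ^ 2 + Rabs chi.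
Proof.
  intros He.
  assert (e ^ 2 <= (Rabs x0 + 1) ^ 2).
  { destruct (Rcase_abs x0); [rewrite Rabs_left | rewrite Rabs_pos_eq]; nra. }
  eapply Rle_trans; [apply Rabs_triang|]. rewrite Rabs_Ropp.
  rewrite Rabs_pos_eq by (apply Rmult_le_pos; apply pow2_ge_0).
  assert (0 <= c ^ 2) by apply pow2_ge_0. nra.
Qed.

Lemma eq0_of_pos_mul_sqr_eq0 (w x : R) : 0 < w -> w * x ^ 2 = 0 -> x = 0.
Proof.
  intros Hw Hx. apply Rsqr_0_uniq. rewrite Rsqr_pow2.
  apply (Rmult_eq_reg_l w); lra.
Qed.

Definition prolate_weight (c chi y : R) : R :=
  2 * y * (c ^ 2 * y ^ 2 - chi) + 2 * c ^ 2 * y * (y ^ 2 - 1).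

Lemma prolate_weight_pos (c chi y : R) :
  1 < y -> 0 < c ^ 2 * y ^ 2 - chi -> 0 < prolate_weight c chi y.
Proof.
  intros Hy Hg. unfold prolate_weight.
  assert (0 <= 2 * c ^ 2 * y * (y ^ 2 - 1)) by (pose proof (pow2_ge_0 c); apply Rmult_le_pos; nra).
  nra.
Qed.

Lemma sqr_sub_pos_of_sqrt_div_lt (c chi y : R) :
  0 < c -> 0 <= chi -> 0 <= y -> sqrt chi / c < y -> 0 < c ^ 2 * y ^ 2 - chi.
Proof.
  intros Hc Hchi Hy Hlt.
  assert (sqrt chi < c * y).
  { replace (sqrt chi) with (sqrt chi / c * c) by (field; lra). nra. }
  pose proof (sqrt_sqrt chi Hchi). pose proof (sqrt_pos chi). nra.
Qed.

Section ProlateODE.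

Variables (c chi : R) (psi : R -> R).
Hypothesis Hode : prolate_ode c chi psi.

Lemma prolate_continuous (x : R) : continuity_pt psi x.
Proof. apply continuity_pt_of_ex_derive, Hode. Qed.

Lemma prolate_flux_derive (x : R) :
  is_derive (fun t => (1 - t ^ 2) * Derive psi t) x ((c ^ 2 * x ^ 2 - chi) * psi x).
Proof.
  destruct Hode as [_ [Hd2 Hode_eq]]. auto_derive; [apply Hd2|].
  specialize (Hode_eq x). change (Derive (fun t => Derive psi t) x) with (Derive (Derive psi) x).
  lra.
Qed.

(* Near x0 the flux (1 - t^2) psi'(t) vanishes at x0 to first order, so
   |(1 - t^2) psi'(t)| <= K M (x0 - t); the factor x0 - t absorbs the zero of
   1 - t^2 when x0 is the singular point 1. *)
Lemma prolate_Derive_bound_left (x0 d B M : R) :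
  Derive psi x0 = 0 -> 0 <= d <= 1 -> 0 <= B ->
  (forall y, x0 - d <= y < x0 -> x0 - y <= B * Rabs (1 - y ^ 2)) ->
  (forall y, x0 - d <= y <= x0 -> Rabs (psi y) <= M) ->
  forall t, x0 - d <= t <= x0 ->
  Rabs (Derive psi t) <= (c ^ 2 * (Rabs x0 + 1) ^ 2 + Rabs chi) * B * M.
Proof.
  intros Hdpsi0 Hd HB Hsing Hmax.
  set (K := c ^ 2 * (Rabs x0 + 1) ^ 2 + Rabs chi).
  assert (HK : 0 <= K) by (pose proof (Rabs_pos x0); pose proof (Rabs_pos chi); unfold K; nra).
  assert (HM : 0 <= M) by (eapply Rle_trans; [apply Rabs_pos | apply (Hmax x0); lra]).
  assert (Hflux : forall t, x0 - d <= t <= x0 ->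
            Rabs ((1 - t ^ 2) * Derive psi t) <= K * M * (x0 - t)).
  { intros t Ht.
    pose proof (abs_sub_le_of_derive_bound (fun t => (1 - t ^ 2) * Derive psi t)
      (fun x => (c ^ 2 * x ^ 2 - chi) * psi x) t x0 (K * M) ltac:(lra)
      (fun x _ => prolate_flux_derive x)) as Hb.
    cbv beta in Hb. rewrite Hdpsi0, Rmult_0_r, Rminus_0_l, Rabs_Ropp in Hb. apply Hb.
    intros x Hx. rewrite Rabs_mult.
    apply Rmult_le_compat; try apply Rabs_pos; [apply prolate_coef_bound | apply Hmax]; lra. }
  intros t Ht. destruct (Req_dec t x0) as [->|].
  { rewrite Hdpsi0, Rabs_R0. apply Rmult_le_pos; nra. }
  specialize (Hsing t ltac:(lra)). specialize (Hflux t Ht).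
  rewrite Rabs_mult in Hflux.
  assert (0 < Rabs (1 - t ^ 2)) by nra.
  apply (Rmult_le_reg_l (Rabs (1 - t ^ 2))); [easy|].
  assert (0 <= K * M) by nra. nra.
Qed.

Lemma prolate_vanishing_extends_left (x0 eta : R) :
  -1 < x0 -> 0 < eta -> (forall y, x0 <= y <= x0 + eta -> psi y = 0) ->
  exists d, 0 < d /\ forall y, x0 - d <= y <= x0 -> psi y = 0.
Proof.
  intros Hx0 Heta Hz.
  pose proof Hode as [Hd1 _].
  assert (Hpsi0 : psi x0 = 0) by (apply Hz; lra).
  assert (Hdpsi0 : Derive psi x0 = 0).
  { apply (is_derive_eq0_of_constant_right psi x0 eta); [easy | | apply Derive_correct, Hd1].
    intros y Hy; rewrite Hpsi0; apply Hz; lra. }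
  destruct (sub_le_abs_one_sub_sqr_left x0 Hx0) as [d0 [B [Hd0 [HB Hsing]]]].
  set (K := c ^ 2 * (Rabs x0 + 1) ^ 2 + Rabs chi).
  assert (HK : 0 <= K) by (pose proof (Rabs_pos x0); pose proof (Rabs_pos chi); unfold K; nra).
  set (d := Rmin (Rmin d0 1) (/ (2 * (K * B + 1)))).
  assert (Hdd0 : d <= d0) by (eapply Rle_trans; [apply Rmin_l | apply Rmin_l]).
  assert (Hd1' : d <= 1) by (eapply Rle_trans; [apply Rmin_l | apply Rmin_r]).
  assert (Hdpos : 0 < d).
  { apply Rmin_pos; [apply Rmin_pos; lra | apply Rinv_0_lt_compat; nra]. }
  assert (Hsmall : K * B * d < 1).
  { assert (d * (2 * (K * B + 1)) <= 1).
    { replace 1 with (/ (2 * (K * B + 1)) * (2 * (K * B + 1))) at 2 by (field; nra).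
      apply Rmult_le_compat_r; [nra | apply Rmin_r]. }
    nra. }
  exists d; split; [easy|].
  destruct (continuity_ab_maj (fun y => Rabs (psi y)) (x0 - d) x0) as [ym [Hmax Hym]];
    [lra | intros y _; apply (continuity_pt_comp psi Rabs);
           [apply prolate_continuous | apply Rcontinuity_abs] |].
  set (M := Rabs (psi ym)) in Hmax.
  assert (HM : 0 <= M) by apply Rabs_pos.
  assert (Hslope := prolate_Derive_bound_left x0 d B M Hdpsi0 ltac:(lra) ltac:(lra)
                      ltac:(intros y Hy; apply Hsing; lra) Hmax).
  assert (Hbound : forall y, x0 - d <= y <= x0 -> Rabs (psi y) <= K * B * M * d).
  { intros y Hy.
    pose proof (abs_sub_le_of_derive_bound psi (Derive psi) y x0 (K * B * M) ltac:(lra)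
      (fun x _ => Derive_correct psi x (Hd1 x))) as Hb.
    rewrite Hpsi0, Rminus_0_l, Rabs_Ropp in Hb.
    assert (0 <= K * B * M) by (apply Rmult_le_pos; nra).
    eapply Rle_trans; [apply Hb; intros x Hx; apply Hslope; lra | nra]. }
  assert (HM0 : M = 0).
  { assert (M <= K * B * M * d) by (apply Hbound; lra). nra. }
  intros y Hy. apply Rabs_eq_0. pose proof (Rabs_pos (psi y)). specialize (Hmax y Hy).
  simpl in Hmax. lra.
Qed.

Lemma prolate_not_vanishing_on (s t : R) :
  RInt (fun t => psi t ^ 2) (-1) 1 = 1 -> 1 <= s -> s < t ->
  ~ (forall y, s < y < t -> psi y = 0).
Proof.
  intros Hnorm Hs Hst Hz.
  assert (Hzero : forall y, -1 < y <= (s + 2 * t) / 3 -> psi y = 0).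
  { apply (vanishing_extends_left psi (-1) ((2 * s + t) / 3)); try lra.
    - exact prolate_continuous.
    - intros x eta Hx Heta; now apply prolate_vanishing_extends_left.
    - intros y Hy; apply Hz; lra. }
  rewrite (RInt_ext _ (fun _ => 0)), RInt_const in Hnorm.
  { unfold scal in Hnorm; simpl in Hnorm; unfold mult in Hnorm; simpl in Hnorm. lra. }
  rewrite Rmin_left, Rmax_right by lra. intros x Hx.
  rewrite Hzero by lra. change (0 ^ 2 = 0). ring.
Qed.

Lemma prolate_second_derive (y : R) :
  1 - y ^ 2 <> 0 ->
  Derive (Derive psi) y = (2 * y * Derive psi y - (chi - c ^ 2 * y ^ 2) * psi y) / (1 - y ^ 2).
Proof.
  intros Hy. destruct Hode as [_ [_ Hode_eq]]. specialize (Hode_eq y).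
  field_simplify_eq; [lra | easy].
Qed.

Lemma prolate_eq0_of_Derive_eq0 (s t : R) :
  (forall y, s < y < t -> Derive psi y = 0) ->
  forall y, s < y < t -> c ^ 2 * y ^ 2 - chi <> 0 -> psi y = 0.
Proof.
  intros Hz y Hy Hg. destruct Hode as [_ [Hd2 Hode_eq]].
  assert (Hdd : Derive (Derive psi) y = 0).
  { apply (is_derive_eq0_of_constant_right (Derive psi) y ((t - y) / 2));
      [lra | | apply Derive_correct, Hd2].
    intros z Hz'; rewrite !Hz; lra. }
  specialize (Hode_eq y). rewrite Hdd, Hz in Hode_eq by easy.
  apply (Rmult_eq_reg_l (chi - c ^ 2 * y ^ 2)); lra.
Qed.

Lemma Qtilde_derive (y : R) :
  1 < y -> is_derive (Qtilde c chi psi) y (prolate_weight c chi y * psi y ^ 2).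
Proof.
  intros Hy. pose proof Hode as [Hd1 [Hd2 _]]. unfold Qtilde, prolate_weight.
  auto_derive; [repeat split; easy|].
  change (Derive (fun x => psi x) y) with (Derive psi y).
  change (Derive (fun x => Derive psi x) y) with (Derive (Derive psi) y).
  rewrite prolate_second_derive by nra. field. nra.
Qed.

Lemma Qfun_derive (y : R) :
  1 < y -> 0 < c ^ 2 * y ^ 2 - chi ->
  is_derive (Qfun c chi psi) y
    (- (prolate_weight c chi y * Derive psi y ^ 2 / (c ^ 2 * y ^ 2 - chi) ^ 2)).
Proof.
  intros Hy Hg. pose proof Hode as [Hd1 [Hd2 _]]. unfold Qfun, prolate_weight.
  auto_derive; [repeat split; try easy; lra|].
  change (Derive (fun x => psi x) y) with (Derive psi y).
  change (Derive (fun x => Derive psi x) y) with (Derive (Derive psi) y).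
  rewrite prolate_second_derive by nra. field. split; nra.
Qed.

Lemma Qtilde_lt (s t : R) :
  RInt (fun t => psi t ^ 2) (-1) 1 = 1 -> 1 < s -> s < t ->
  (forall y, s <= y -> 0 < c ^ 2 * y ^ 2 - chi) ->
  Qtilde c chi psi s < Qtilde c chi psi t.
Proof.
  intros Hnorm Hs Hst Hgap.
  assert (Hw : forall y, s <= y -> 0 < prolate_weight c chi y).
  { intros y Hy. apply prolate_weight_pos; [lra | now apply Hgap]. }
  apply (lt_of_derive_nonneg _ (fun y => prolate_weight c chi y * psi y ^ 2)); [easy | | |].
  - intros x Hx; apply Qtilde_derive; lra.
  - intros x Hx. pose proof (Hw x ltac:(lra)). pose proof (pow2_ge_0 (psi x)). nra.
  - intros Hz; apply (prolate_not_vanishing_on s t); [easy | lra | easy |].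
    intros y Hy. specialize (Hz y Hy). cbv beta in Hz.
    apply (eq0_of_pos_mul_sqr_eq0 (prolate_weight c chi y)); [apply Hw; lra | easy].
Qed.

Lemma Qfun_lt (s t : R) :
  RInt (fun t => psi t ^ 2) (-1) 1 = 1 -> 1 < s -> s < t ->
  (forall y, s <= y -> 0 < c ^ 2 * y ^ 2 - chi) ->
  Qfun c chi psi t < Qfun c chi psi s.
Proof.
  intros Hnorm Hs Hst Hgap.
  set (dQ y := prolate_weight c chi y * Derive psi y ^ 2 / (c ^ 2 * y ^ 2 - chi) ^ 2).
  assert (HdQ : forall y, s <= y -> 0 <= dQ y /\ (dQ y = 0 -> Derive psi y = 0)).
  { intros y Hy. pose proof (Hgap y Hy) as Hg. pose proof (prolate_weight_pos c chi y ltac:(lra) Hg).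
    assert (0 < prolate_weight c chi y / (c ^ 2 * y ^ 2 - chi) ^ 2) by (apply Rdiv_lt_0_compat; nra).
    unfold dQ. split.
    - apply Rdiv_le_0_compat; [pose proof (pow2_ge_0 (Derive psi y)); nra | nra].
    - intros Hz. apply (eq0_of_pos_mul_sqr_eq0 (prolate_weight c chi y / (c ^ 2 * y ^ 2 - chi) ^ 2));
        [easy | rewrite <- Hz; field; lra]. }
  apply Ropp_lt_cancel, (lt_of_derive_nonneg (fun x => - Qfun c chi psi x) dQ); [easy | | |].
  - intros x Hx. pose proof (Qfun_derive x ltac:(lra) ltac:(apply Hgap; lra)) as HQ.
    apply is_derive_opp in HQ. unfold opp in HQ; simpl in HQ. now rewrite Ropp_involutive in HQ.
  - intros x Hx; apply HdQ; lra.
  - intros Hz; apply (prolate_not_vanishing_on s t); [easy | lra | easy |].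
    intros y Hy. apply (prolate_eq0_of_Derive_eq0 s t); [| easy | apply Rgt_not_eq, Hgap; lra].
    intros z Hz'. apply HdQ, Hz; lra.
Qed.

End ProlateODE.

Theorem theorem34 (c : R) (n : nat) (psi : R -> R) (lam : C) (chi : R) :
  0 < c ->
  is_pswf c n psi lam ->
  0 < chi ->
  prolate_ode c chi psi ->
  forall s t : R,
    Rmax (sqrt chi / c) 1 < s -> s < t ->
    Qfun c chi psi t < Qfun c chi psi s /\
    Qtilde c chi psi s < Qtilde c chi psi t.
Proof.
  intros Hc [[_ [Hnorm _]] _] Hchi Hode s t Hs Hst.
  pose proof (Rmax_l (sqrt chi / c) 1). pose proof (Rmax_r (sqrt chi / c) 1).
  assert (Hgap : forall y, s <= y -> 0 < c ^ 2 * y ^ 2 - chi).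
  { intros y Hy; apply sqr_sub_pos_of_sqrt_div_lt; lra. }
  split; [apply Qfun_lt | apply Qtilde_lt]; easy || lra.
Qed.
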